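(* Let $n\geq 0$ be an integer and let $\alpha,\beta\in\mathbb{C}$ with $\beta\neq 0$ and $\alpha^2\neq 4\beta$. Fix a square root $\sqrt{\alpha^2-4\beta}$ and write $D=\alpha^2-4\beta$, with $D^{t/2}:=(\sqrt{D})^{t}$. Then $$M_n^{(\alpha,\beta)}=\sum_{k=0}^{n+1}\left(\frac{\alpha+\sqrt{D}}{2}\right)^{n-2k}\frac{\beta^k}{n+1}\binom{n+1}{k}\binom{n+1}{k+1} =\frac{D^{\frac{n+2}{2}}}{\beta}\sum_{k=0}^{n+1}\left(\frac{\alpha}{\sqrt{D}}-1\right)^{k+1}\frac{C_k}{2^{k+1}}\binom{n+1+k}{2k},$$ where $C_k$ is the $k$-th Catalan number and $M_n^{(\alpha,\beta)}$ is the weighted Motzkin number defined in the context.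
   Context: $C_k=\frac{1}{k+1}\binom{2k}{k}$ are the Catalan numbers. For an integer $m\geq 0$ and $a,b\in\mathbb{C}$, the $(a,b)$-Motzkin number is $M_m^{(a,b)}=\sum_{k=0}^{\lfloor m/2\rfloor}\binom{m}{2k}C_k a^{m-2k}b^k$. (Binomial coefficients $\binom{p}{q}$ with $q>p$ are $0$.) *)

From HB Require Import structures.
From mathcomp Require Import all_boot all_order all_algebra.
From mathcomp Require Import complex.
Set Implicit Arguments. Unset Strict Implicit. Unset Printing Implicit Defensive.
Import Order.TTheory GRing.Theory Num.Theory.
Local Open Scope ring_scope.

Definition catalan (F : fieldType) (k : nat) : F :=
  'C(k.*2, k)%:R / k.+1%:R.

Definition motzkin (F : fieldType) (m : nat) (a b : F) : F :=
  \sum_(0 <= k < (m./2).+1) 'C(m, k.*2)%:R * catalan F k * a ^+ (m - k.*2) * b ^+ k.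

From mathcomp Require Import zify ring.
From HB Require Import structures.
From mathcomp Require Import all_boot all_order all_algebra.
From mathcomp Require Import complex.
Import Order.TTheory GRing.Theory Num.Theory.

(* x = (alpha + s)/2 and y = (alpha - s)/2 are the roots of t^2 - alpha t + beta,
   so alpha = x + y, beta = x y and s = x - y.  Expanding (x + y)^(n-2j) (x y)^j
   binomially turns M_n(x + y, x y) into the homogeneous Narayana polynomial
   sum_k N(n+1, k+1) x^(n-k) y^k, the coefficients being Vandermonde
   convolutions; this is the first formula.  Writing x = (x - y) + y in
   x * N_n(x, y) and expanding once more gives
   sum_l C_l binom(n+1+l, 2l) (x - y)^(n+1-l) y^l, which is the second formula
   because alpha/s - 1 = 2y/s. *)

Lemma ffactD n m1 m2 : n ^_ (m1 + m2) = n ^_ m1 * (n - m1) ^_ m2.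
Proof.
rewrite !ffact_prod big_split_ord /=; congr (_ * _).
by apply: eq_bigr => i _; rewrite subnDA.
Qed.

Lemma bin_trinomial a b c : 'C(a, b) * 'C(a - b, c) = 'C(a, b + c) * 'C(b + c, b).
Proof.
have fact_pos : 0 < b`! * c`! by rewrite muln_gt0 !fact_gt0.
apply/eqP; rewrite -(eqn_pmul2r fact_pos) mulnACA !bin_ffact -ffactD.
have := bin_fact (leq_addr c b); rewrite addKn => fact_sum.
by rewrite -mulnA fact_sum bin_ffact.
Qed.

Lemma Vandermonde_shift k m r :
  \sum_(j < k.+1) 'C(k, j) * 'C(m, j + r) = 'C(k + m, k + r).
Proof.
rewrite -binomial.Vandermonde.
rewrite -[RHS](@big_rmcond _ _ _ _ _ (fun j : 'I__ => j < k.+1)) => [|j]; last first.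
  by rewrite -leqNgt => /bin_small->.
rewrite -(big_ord_widen _ (fun j => 'C(k, j) * 'C(m, k + r - j))) ?ltnS ?leq_addr //.
rewrite [LHS](reindex_inj rev_ord_inj) /=.
apply: eq_bigr => j _; rewrite subSS bin_sub; last by rewrite -ltnS.
by rewrite addnBAC // -ltnS.
Qed.

Lemma bin_trinomial_double n j k : j <= k ->
  'C(n, j.*2) * 'C(j.*2, j) * 'C(n - j.*2, k - j) = 'C(n, k) * 'C(k, j) * 'C(n - k, j).
Proof.
move=> le_jk; rewrite -addnn -bin_trinomial -mulnA subnDA bin_trinomial subnKC //.
have := bin_sub (leq_addr j k); rewrite addKn => bin_sym.
by rewrite mulnA bin_trinomial [RHS]mulnAC [in RHS]bin_trinomial (addnC j k) bin_sym.
Qed.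

Local Open Scope ring_scope.

Lemma sum_triangle_exchange (V : nmodType) N (F : nat -> nat -> V) :
  \sum_(j < N) \sum_(j <= l < N) F j l = \sum_(l < N) \sum_(j < l.+1) F j l.
Proof.
rewrite -(big_mkord xpredT (fun j => \sum_(j <= l < N) F j l)).
rewrite -(big_mkord xpredT (fun l => \sum_(j < l.+1) F j l)).
under eq_bigr => j _ do rewrite (@big_nat_widenl _ _ _ j 0 N xpredT _ (leq0n j)).
rewrite (exchange_big_dep_nat xpredT) //=.
apply: eq_big_nat => l /andP[_ lt_lN].
by rewrite -(big_mkord xpredT (fun j => F j l)) [RHS](big_nat_widen _ _ N).
Qed.

Lemma exprD_mul_shift (R : comPzSemiRingType) (u v : R) m d j :
  (u + v) ^+ m * (u ^+ d * v ^+ j) =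
  \sum_(j <= l < (j + d + m).+1) 'C(m, l - j)%:R * (u ^+ (j + d + m - l) * v ^+ l).
Proof.
rewrite -[X in \sum_(X <= _ < _) _](add0n j) (big_addn 0 _ j xpredT).
rewrite -addnA subSn ?leq_addr // addKn.
rewrite (@big_cat_nat _ _ _ m.+1 0 _ xpredT) ?ltnS ?leq_addl //=.
rewrite [X in _ = _ + X]big1_seq ?addr0; last first.
  move=> i /andP[_]; rewrite mem_index_iota => /andP[lt_mi _].
  by rewrite addnK bin_small // mul0r.
rewrite exprDn big_distrl big_mkord /=; apply: eq_bigr => i _.
rewrite addnK -mulr_natl -!mulrA; congr (_ * _).
have -> : (j + (d + m) - (i + j) = d + (m - i))%N by have := ltn_ord i; lia.
by rewrite exprD exprD; ring.
Qed.

(* The hypothesis on c makes the truncated exponent M - j - d j harmless. *)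
Lemma sum_exprD_regroup (R : comPzSemiRingType) M (c : nat -> R) (d : nat -> nat)
    (u v : R) :
  (forall j, (M < j + d j)%N -> c j = 0) ->
  \sum_(j < M.+1) c j * ((u + v) ^+ (M - j - d j) * (u ^+ d j * v ^+ j)) =
  \sum_(l < M.+1)
    (\sum_(j < l.+1) c j * 'C(M - j - d j, l - j)%:R) * (u ^+ (M - l) * v ^+ l).
Proof.
move=> c_eq0; under [RHS]eq_bigr => l _ do rewrite big_distrl /=.
rewrite -(@sum_triangle_exchange _ _
  (fun j l => c j * 'C(M - j - d j, l - j)%:R * (u ^+ (M - l) * v ^+ l))).
apply: eq_bigr => j _.
have [le_M|/c_eq0->] := leqP (j + d j) M; last first.
  by rewrite mul0r big1 // => l _; rewrite !mul0r.
have sum_exps : (j + d j + (M - j - d j))%N = M by rewrite -subnDA subnKC.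
rewrite exprD_mul_shift sum_exps big_distrr.
by apply: eq_big_nat => l _; rewrite /= mulrA.
Qed.

Definition narayana (F : fieldType) n k : F :=
  'C(n.+1, k)%:R * 'C(n.+1, k.+1)%:R / n.+1%:R.

Definition narayana_poly (F : fieldType) n (x y : F) : F :=
  \sum_(k < n.+1) narayana F n k * (x ^+ (n - k) * y ^+ k).

Section NarayanaCatalan.
Variable F : numFieldType.

Lemma narayana_small n k : (n < k)%N -> narayana F n k = 0.
Proof.
by move=> lt_nk; rewrite /narayana (bin_small (lt_nk : n.+1 < k.+1)%N) mulr0 mul0r.
Qed.

Lemma sum_catalan_narayana n k : (k <= n)%N ->
  \sum_(j < k.+1) 'C(n, j.*2)%:R * catalan F j * 'C(n - j.*2, k - j)%:R = narayana F n k.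
Proof.
move=> le_kn.
have term (j : 'I_k.+1) : 'C(n, j.*2)%:R * catalan F j * 'C(n - j.*2, k - j)%:R
    = 'C(n, k)%:R / (n - k).+1%:R * ('C(k, j) * 'C((n - k).+1, j + 1))%N%:R.
  have diag : 'C((n - k).+1, j + 1)%:R = (n - k).+1%:R * 'C(n - k, j)%:R / j.+1%:R :> F.
    by rewrite -natrM mul_bin_diag addn1 natrM mulrC mulKf ?pnatr_eq0.
  transitivity (('C(n, j.*2) * 'C(j.*2, j) * 'C(n - j.*2, k - j))%N%:R / j.+1%:R : F).
    by rewrite /catalan !natrM; field; rewrite nat1r pnatr_eq0.
  rewrite (@bin_trinomial_double n j k (ltn_ord j)) !natrM diag.
  by field; rewrite !nat1r !pnatr_eq0.
have down : 'C(n, k)%:R = (n - k).+1%:R * 'C(n.+1, k)%:R / n.+1%:R :> F.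
  by rewrite -natrM -(subSn le_kn) -mul_bin_down natrM mulrC mulKf ?pnatr_eq0.
rewrite (eq_bigr _ (fun j _ => term j)) -mulr_sumr -natr_sum Vandermonde_shift.
rewrite (_ : k + (n - k).+1 = n.+1)%N; last by lia.
by rewrite /narayana down addn1; field; rewrite !nat1r !pnatr_eq0.
Qed.

Lemma sum_narayana_catalan n l : (l <= n.+1)%N ->
  \sum_(k < l.+1) narayana F n k * 'C(n.+1 - k, l - k)%:R
  = catalan F l * 'C(n.+1 + l, l.*2)%:R.
Proof.
move=> le_ln.
have term (k : 'I_l.+1) : narayana F n k * 'C(n.+1 - k, l - k)%:R
    = 'C(n.+1, l)%:R / n.+1%:R * ('C(l, k) * 'C(n.+1, k + 1))%N%:R.
  have le_kl : (k <= l)%N := ltn_ord k.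
  have := bin_trinomial n.+1 k (l - k); rewrite subnKC // => tri.
  transitivity (('C(n.+1, k) * 'C(n.+1 - k, l - k))%N%:R * 'C(n.+1, k.+1)%:R / n.+1%:R : F).
    by rewrite /narayana natrM; ring.
  by rewrite tri addn1 !natrM; field; rewrite nat1r pnatr_eq0.
have := mul_bin_left (n.+1 + l) l; rewrite addnK => left.
have up : 'C(n.+1 + l, l.+1)%:R = n.+1%:R * 'C(n.+1 + l, l)%:R / l.+1%:R :> F.
  by rewrite -natrM -left natrM mulrC mulKf ?pnatr_eq0.
have := bin_trinomial (n.+1 + l) l l; rewrite addnK addnn => tri.
rewrite (eq_bigr _ (fun k _ => term k)) -mulr_sumr -natr_sum Vandermonde_shift.
rewrite (addnC l) addn1 up /catalan.
rewrite [RHS]mulrAC -[in RHS]natrM (mulnC 'C(l.*2, l)) -tri natrM.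
by field; rewrite !nat1r !pnatr_eq0.
Qed.

Lemma motzkin_narayana_poly n (x y : F) :
  motzkin n (x + y) (x * y) = narayana_poly F n x y.
Proof.
pose c k := 'C(n, k.*2)%:R * catalan F k.
have c_eq0 k : (n < k + k)%N -> c k = 0.
  by rewrite addnn /c => /bin_small->; rewrite mul0r.
rewrite /motzkin big_mkord.
rewrite (big_ord_widen n.+1 (fun k => c k * (x + y) ^+ (n - k.*2) * (x * y) ^+ k)); last first.
  by rewrite ltnS leq_half_double -addnn; lia.
rewrite big_rmcond => [|k]; last first.
  by rewrite -leqNgt ltn_half_double -addnn => /c_eq0->; rewrite !mul0r.
under eq_bigr do rewrite exprMn -addnn subnDA -mulrA.
rewrite (@sum_exprD_regroup _ n c id) //; apply: eq_bigr => k _.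
rewrite -(@sum_catalan_narayana n k (ltn_ord k)); congr (_ * _).
by apply: eq_bigr => j _; rewrite -subnDA addnn.
Qed.

Lemma mul_narayana_poly n (x y : F) :
  x * narayana_poly F n x y
  = \sum_(l < n.+2)
      catalan F l * 'C(n.+1 + l, l.*2)%:R * ((x - y) ^+ (n.+1 - l) * y ^+ l).
Proof.
transitivity (\sum_(k < n.+2)
    narayana F n k * ((x - y + y) ^+ (n.+1 - k - 0) * ((x - y) ^+ 0 * y ^+ k))).
  rewrite big_ord_recr /= narayana_small // mul0r addr0 mulr_sumr.
  apply: eq_bigr => k _; rewrite subrK subn0 expr0 mul1r.
  by rewrite (@subSn k n (ltn_ord k)) exprS; ring.
rewrite (@sum_exprD_regroup _ n.+1 (narayana F n) (fun=> 0%N)) => [|k]; last first.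
  by rewrite addn0 => /ltnW/narayana_small.
apply: eq_bigr => l _.
under eq_bigr do rewrite subn0.
by rewrite (@sum_narayana_catalan n l (ltn_ord l)).
Qed.

End NarayanaCatalan.

Local Open Scope complex_scope.

Theorem proposition3p2 (R : rcfType) (n : nat) (alpha beta s : R[i])
  (hbeta : beta != 0) (hD : alpha ^+ 2 != 4%:R * beta)
  (hs : s ^+ 2 = alpha ^+ 2 - 4%:R * beta) :
  motzkin n alpha beta =
    \sum_(0 <= k < n.+2)
      ((alpha + s) / 2%:R) ^ (n%:Z - (k.*2)%:Z) * (beta ^+ k / n.+1%:R)
        * 'C(n.+1, k)%:R * 'C(n.+1, k.+1)%:R
  /\
  motzkin n alpha beta =
    s ^+ n.+2 / beta *
    \sum_(0 <= k < n.+2)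
      (alpha / s - 1) ^+ k.+1 * (catalan _ k / 2%:R ^+ k.+1)
        * 'C(n.+1 + k, k.*2)%:R.
Proof.
set x := (alpha + s) / 2%:R; set y := (alpha - s) / 2%:R.
have two_neq0 : 2%:R != 0 :> R[i] by rewrite pnatr_eq0.
have alphaE : alpha = x + y by rewrite /x /y; field.
have sE : s = x - y by rewrite /x /y; field.
have betaE : beta = x * y.
  have -> : beta = (alpha ^+ 2 - s ^+ 2) / 4%:R by rewrite hs; field.
  by rewrite /x /y; field.
have s_neq0 : s != 0 by apply: contraNneq hD => s0; rewrite -subr_eq0 -hs s0 expr0n.
have x_neq0 : x != 0 by apply: contraNneq hbeta => x0; rewrite betaE x0 mul0r.
have y_neq0 : y != 0 by apply: contraNneq hbeta => y0; rewrite betaE y0 mulr0.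
clearbody x y; subst alpha beta s; split.
  rewrite motzkin_narayana_poly big_mkord big_ord_recr /=.
  rewrite (bin_small (ltnSn n.+1)) mulr0 addr0.
  apply: eq_bigr => k _; have le_kn : (k <= n)%N := ltn_ord k.
  have -> : (n%:Z - (k.*2)%:Z = (n - k)%N%:Z + - k%:Z)%R by lia.
  rewrite expfzDr // -exprnP -exprnN /narayana exprMn.
  by field; rewrite nat1r pnatr_eq0 expf_neq0.
rewrite -(mulKf x_neq0 (motzkin _ _ _)) motzkin_narayana_poly mul_narayana_poly.
rewrite big_mkord !mulr_sumr; apply: eq_bigr => l _.
have le_ln : (l <= n.+1)%N := ltn_ord l.
have -> : (x + y) / (x - y) - 1 = 2%:R * y / (x - y) by field.
have -> : (x - y) ^+ n.+2 = (x - y) ^+ (n.+1 - l) * (x - y) ^+ l.+1.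
  by rewrite -exprD addnS subnK.
rewrite expr_div_n !exprMn !exprS /catalan.
by field; rewrite nat1r pnatr_eq0 !expf_neq0 ?s_neq0 ?x_neq0 ?y_neq0.
Qed.
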